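(* Let $f:\{0,1\}^n\to\{0,1\}$, $J\subseteq[n]$, and let $f_J$ be a $J$-symmetric function closest to $f$. Then $$\mathrm{dist}(f,f_J)\le\mathrm{SymInf}_f(J)\le 2\cdot\mathrm{dist}(f,f_J).$$
   Context: $\mathcal{S}_J$ is the set of permutations of $[n]$ fixing every element outside $J$; for a permutation $\pi$, $\pi x$ is the vector whose $\pi(i)$-th coordinate is $x_i$. $f$ is $J$-symmetric if $f(\pi x)=f(x)$ for all $x$ and $\pi\in\mathcal{S}_J$. $\mathrm{dist}(f,g)=\Pr_x[f(x)\ne g(x)]$ for uniform $x\in\{0,1\}^n$. $\mathrm{SymInf}_f(J)=\Pr_{x,\pi}[f(x)\ne f(\pi x)]$ with $x$ uniform in $\{0,1\}^n$ and $\pi$ uniform in $\mathcal{S}_J$. *)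

From mathcomp Require Import all_boot all_order all_algebra all_fingroup.
Set Implicit Arguments. Unset Strict Implicit. Unset Printing Implicit Defensive.
Import GRing.Theory Num.Theory.
Local Open Scope ring_scope.

(* Points of {0,1}^n, coordinates indexed by 'I_n (i.e. [n] shifted to 0..n-1). *)
Notation cube n := {ffun 'I_n -> bool}.

(* pi x : the vector whose pi(i)-th coordinate is x_i, i.e. (pi x)_j = x_(pi^-1 j). *)
Definition pact (n : nat) (p : {perm 'I_n}) (x : cube n) : cube n :=
  [ffun j => x (p^-1%g j)].

Definition SymJ (n : nat) (J : {set 'I_n}) : {set {perm 'I_n}} :=
  [set p | perm_on J p].

Definition J_symmetric (n : nat) (J : {set 'I_n}) (f : cube n -> bool) : Prop :=
  forall (x : cube n) (p : {perm 'I_n}), p \in SymJ J -> f (pact p x) = f x.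

Definition dist (n : nat) (f g : cube n -> bool) : rat :=
  #|[set x : cube n | f x != g x]|%:R / #|[set: cube n]|%:R.

Definition SymInf (n : nat) (f : cube n -> bool) (J : {set 'I_n}) : rat :=
  #|[set xp : cube n * {perm 'I_n} |
      (xp.2 \in SymJ J) && (f xp.1 != f (pact xp.2 xp.1))]|%:R
  / (#|[set: cube n]| * #|SymJ J|)%:R.

From mathcomp Require Import all_boot all_order all_algebra all_fingroup.
Import Order.TTheory GRing.Theory Num.Theory.
Set Implicit Arguments.
Unset Strict Implicit.
Unset Printing Implicit Defensive.
Local Open Scope ring_scope.

(* Upper bound: f_J is constant on S_J-orbits, so f x <> f (pi x) forces f to
   disagree with f_J at x or at pi x, and pi x is uniform when x is.
   Lower bound: the J-symmetric function g that takes at x the majority value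
   of f (pi x) over pi in S_J disagrees with f (pi x) for at most as many pi as
   f x does; averaging over x gives dist(f, g) <= SymInf_f(J), and
   dist(f, f_J) <= dist(f, g) since f_J is closest. *)

Lemma pactM n (p q : {perm 'I_n}) (x : cube n) : pact q (pact p x) = pact (p * q)%g x.
Proof. by apply/ffunP => j; rewrite !ffunE invMg permM. Qed.

Lemma pact_inj n (p : {perm 'I_n}) : injective (pact p).
Proof.
move=> x y /(congr1 (fun z : cube n => z (p _))) exy; apply/ffunP => j.
by have := exy j; rewrite !ffunE permK.
Qed.

Lemma SymJ_card_gt0 n (J : {set 'I_n}) : (0 < #|SymJ J|)%N.
Proof. by apply/card_gt0P; exists 1%g; rewrite inE perm_on1. Qed.

Lemma ler_natdiv (R : numFieldType) (a b d : nat) :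
  (a <= b)%N -> a%:R / d%:R <= b%:R / d%:R :> R.
Proof. by move=> ab; rewrite ler_wpM2r ?invr_ge0 ?ler0n ?ler_nat. Qed.

Lemma card_set_sum (T : finType) (P : pred T) :
  #|[set x | P x]| = (\sum_x (P x : nat))%N.
Proof.
rewrite -sum1_card big_mkcond; apply: eq_bigr => x _.
by rewrite inE; case: (P x).
Qed.

Lemma card_pairs (T1 T2 : finType) (P : T1 -> T2 -> bool) :
  #|[set xy : T1 * T2 | P xy.1 xy.2]| = (\sum_x #|[set y | P x y]|)%N.
Proof.
under eq_bigr do rewrite card_set_sum.
by rewrite card_set_sum pair_big; apply: eq_bigr => -[x y].
Qed.

Section Mismatch.
Variables (n : nat) (J : {set 'I_n}) (f : cube n -> bool).

Definition mismatch (x : cube n) (b : bool) : nat :=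
  #|[set p in SymJ J | f (pact p x) != b]|.

Definition majority (x : cube n) : bool := (mismatch x true < mismatch x false)%N.

Lemma mismatch_pact q x b : q \in SymJ J -> mismatch (pact q x) b = mismatch x b.
Proof.
rewrite inE => qS; rewrite /mismatch -(card_imset _ (mulgI q)).
apply: eq_card => r; rewrite !inE; apply/imsetP/andP => [[p] | [rS fr]].
  by rewrite !inE pactM => /andP[pS fp] ->; rewrite perm_onM.
exists (q^-1 * r)%g; rewrite ?mulKVg // inE pactM mulKVg fr andbT.
by rewrite inE perm_onM ?perm_onV.
Qed.

Lemma majority_J_symmetric : J_symmetric J majority.
Proof. by move=> x q qS; rewrite /majority !mismatch_pact. Qed.

Lemma mismatch_majority x b : (mismatch x (majority x) <= mismatch x b)%N.
Proof. by rewrite /majority; case: b; case: ltnP => // /ltnW. Qed.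

Lemma mismatch_self_le x b :
  (mismatch x (f x) <= mismatch x b + (f x != b) * #|SymJ J|)%N.
Proof.
have [<-|neq] := eqVneq b (f x); first by rewrite leq_addr.
rewrite mul1n (leq_trans _ (leq_addl _ _)) // subset_leq_card //.
by apply/subsetP => p; rewrite inE => /andP[].
Qed.

Lemma sum_mismatch_sym h : J_symmetric J h ->
  (\sum_x mismatch x (h x) = #|SymJ J| * #|[set x | f x != h x]|)%N.
Proof.
move=> hsym.
transitivity (\sum_(p in SymJ J) \sum_x (f (pact p x) != h (pact p x) : nat))%N.
  rewrite exchange_big /=; apply: eq_bigr => x _.
  rewrite /mismatch card_set_sum [RHS]big_mkcond /=; apply: eq_bigr => p _.
  by case: ifP => // pS; rewrite hsym.
rewrite -sum_nat_const; apply: eq_bigr => p _.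
by rewrite card_set_sum [RHS](reindex_inj (@pact_inj n p)).
Qed.

Lemma sum_mismatch_self_le h : J_symmetric J h ->
  (\sum_x mismatch x (f x) <= 2 * (#|SymJ J| * #|[set x | f x != h x]|))%N.
Proof.
move=> hsym; rewrite mul2n -addnn -{1}(sum_mismatch_sym hsym).
apply: (@leq_trans (\sum_x (mismatch x (h x) + (f x != h x) * #|SymJ J|))%N).
  by apply: leq_sum => x _; apply: mismatch_self_le.
by rewrite big_split /= -big_distrl /= (card_set_sum (fun x => f x != h x)) mulnC.
Qed.

Lemma majority_sum_mismatch_le :
  (#|SymJ J| * #|[set x | f x != majority x]| <= \sum_x mismatch x (f x))%N.
Proof.
rewrite -(sum_mismatch_sym majority_J_symmetric).
by apply: leq_sum => x _; apply: mismatch_majority.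
Qed.

Lemma SymInfE :
  SymInf f J = (\sum_x mismatch x (f x))%:R / (#|[set: cube n]| * #|SymJ J|)%:R.
Proof.
rewrite /SymInf (card_pairs (fun x p => (p \in SymJ J) && (f x != f (pact p x)))).
congr (_%:R / _); apply: eq_bigr => x _; apply: eq_card => p.
by rewrite !inE eq_sym.
Qed.

End Mismatch.

Lemma distE n (J : {set 'I_n}) (f g : cube n -> bool) :
  dist f g = (#|SymJ J| * #|[set x | f x != g x]|)%:R / (#|[set: cube n]| * #|SymJ J|)%:R.
Proof.
rewrite /dist !natrM [X in _ = _ / X]mulrC -mulf_div divff ?mul1r //.
by rewrite pnatr_eq0 -lt0n SymJ_card_gt0.
Qed.

Theorem lemma3 (n : nat) (f fJ : {ffun 'I_n -> bool} -> bool) (J : {set 'I_n})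
  (hsym : J_symmetric J fJ)
  (hclosest : forall g : {ffun 'I_n -> bool} -> bool,
      J_symmetric J g -> dist f fJ <= dist f g) :
  dist f fJ <= SymInf f J /\ SymInf f J <= 2 * dist f fJ.
Proof.
rewrite SymInfE; split.
  apply: le_trans (hclosest _ (majority_J_symmetric f)) _.
  by rewrite (distE J) ler_natdiv ?majority_sum_mismatch_le.
by rewrite (distE J) mulrA -natrM ler_natdiv ?sum_mismatch_self_le.
Qed.
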